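(* Let $N\ge2$, $\mu>0$, $c>0$, $2+\frac4N<p<2^*$, and let $u\in S(c)$. Set $k_0=\frac{p\gamma_pNc^2}{2(p\gamma_p-2)}$ and $c_0=\big[\frac{p2^{p\gamma_p/2}}{\mu(p\gamma_p)^{(p\gamma_p+2)/2}}(\frac{p\gamma_p-2}{N})^{(p\gamma_p-2)/2}C(N,p)^{-p}\big]^{1/(p-2)}$. If $P(u)\le0$ and $\|\nabla u\|_2^2=k_0$, then $c\ge c_0$. Consequently, if $P(u)\le0$ and $c<c_0$, then $\|\nabla u\|_2^2\ne k_0$.
   Context: $\gamma_p=\frac{N(p-2)}{2p}$, $C(N,p)$ the best constant in $\|u\|_p\le C(N,p)\|\nabla u\|_2^{\gamma_p}\|u\|_2^{1-\gamma_p}$. $W=\{u\in H^1(\mathbb{R}^N):\int u^2|\log u^2|<\infty\}$, $S(c)=\{u\in W:\|u\|_2=c\}$, and $P(u)=\|\nabla u\|_2^2-\mu\gamma_p\|u\|_p^p-\frac N2c^2$. *)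

From HB Require Import structures.
From mathcomp Require Import all_boot all_order all_algebra.
From mathcomp Require Import all_classical all_reals all_analysis.
Set Implicit Arguments. Unset Strict Implicit. Unset Printing Implicit Defensive.
Import Order.TTheory GRing.Theory Num.Theory.
Import numFieldNormedType.Exports.
Local Open Scope classical_set_scope.
Local Open Scope ring_scope.

Section RN.
Variables (R : realType) (N : nat).
Local Notation RN := 'rV[R]_N.

Definition setcoord (x : RN) (i : 'I_N) (t : R) : RN :=
  \row_j (if j == i then t else x ord0 j).

Fixpoint iint (s : seq 'I_N) (F : RN -> \bar R) (x : RN) : \bar R :=
  match s with
  | [::] => F x
  | i :: s' => (\int[lebesgue_measure]_t iint s' F (setcoord x i t))%E
  end.

(* Lebesgue integral over R^N (via Fubini/Tonelli as iterated integrals) *)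
Definition intRN (F : RN -> \bar R) : \bar R := iint (enum 'I_N) F 0.

Definition borelRN : set (set RN) := smallest (sigma_algebra setT) open.
Definition borel_fun (u : RN -> R) : Prop :=
  forall O : set R, open O -> borelRN (u @^-1` O).

Definition ei (i : 'I_N) : RN := delta_mx 0 i.
Definition partial (i : 'I_N) (f : RN -> R) : RN -> R :=
  fun x => 'D_(ei i) f x.
Definition iter_partial (s : seq 'I_N) (f : RN -> R) : RN -> R :=
  foldr partial f s.

Definition test_fun (phi : RN -> R) : Prop :=
  (forall s : seq 'I_N, continuous (iter_partial s phi) /\
     forall (i : 'I_N) (x : RN), derivable (iter_partial s phi) x (ei i)) /\
  exists r : R, forall x : RN, r < `|x| -> phi x = 0.

Definition weak_grad (u : RN -> R) (g : 'I_N -> RN -> R) : Prop :=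
  forall (i : 'I_N) (phi : RN -> R), test_fun phi ->
    intRN (fun x => (u x * partial i phi x)%:E) =
    (- intRN (fun x => (g i x * phi x)%:E))%E.

Definition Lp_int (p : R) (u : RN -> R) : \bar R :=
  intRN (fun x => (`|u x| `^ p)%:E).

Definition H1 (u : RN -> R) (g : 'I_N -> RN -> R) : Prop :=
  borel_fun u /\ (Lp_int 2 u < +oo)%E /\ weak_grad u g /\
  forall i, borel_fun (g i) /\ (Lp_int 2 (g i) < +oo)%E.

Definition Lpnorm (p : R) (u : RN -> R) : R := fine (Lp_int p u) `^ p^-1.
Definition grad_sq (g : 'I_N -> RN -> R) : R :=
  \sum_(i < N) fine (Lp_int 2 (g i)).

Definition inW (u : RN -> R) (g : 'I_N -> RN -> R) : Prop :=
  H1 u g /\ (intRN (fun x => (u x ^+ 2 * `|ln (u x ^+ 2)|)%:E) < +oo)%E.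

Definition inS (c : R) (u : RN -> R) (g : 'I_N -> RN -> R) : Prop :=
  inW u g /\ Lpnorm 2 u = c.

Definition gamma_p (p : R) : R := N%:R * (p - 2) / (2 * p).

Definition GN_const (p : R) : R :=
  inf [set C : R | 0 <= C /\ forall u g, H1 u g ->
      Lpnorm p u <= C * (Num.sqrt (grad_sq g)) `^ gamma_p p
                      * Lpnorm 2 u `^ (1 - gamma_p p)].

Definition P_energy (mu p c : R) (u : RN -> R) (g : 'I_N -> RN -> R) : R :=
  grad_sq g - mu * gamma_p p * fine (Lp_int p u) - N%:R / 2 * c ^+ 2.

Definition crit_exp : \bar R :=
  if (2 < N)%N then (2 * N%:R / (N%:R - 2) : R)%:E else +oo%E.

Definition k0_val (p c : R) : R :=
  p * gamma_p p * N%:R * c ^+ 2 / (2 * (p * gamma_p p - 2)).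

Definition c0_val (mu p : R) : R :=
  (p * 2 `^ (p * gamma_p p / 2)
     / (mu * (p * gamma_p p) `^ ((p * gamma_p p + 2) / 2))
     * ((p * gamma_p p - 2) / N%:R) `^ ((p * gamma_p p - 2) / 2)
     * GN_const p `^ (- p)) `^ (p - 2)^-1.

End RN.

From HB Require Import structures.
From mathcomp Require Import all_boot all_order all_algebra.
From mathcomp Require Import all_classical all_reals all_analysis.
From mathcomp Require Import ring lra.
Set Implicit Arguments. Unset Strict Implicit. Unset Printing Implicit Defensive.
Import Order.TTheory GRing.Theory Num.Theory.
Local Open Scope ring_scope.

(* Write q := p gamma_p = N (p - 2) / 2, which exceeds 2 exactly when
   p > 2 + 4/N.  When P(u) <= 0 and ||grad u||^2 = k0, the identity
   k0 - N c^2/2 = N c^2/(q - 2) bounds ||u||_p^p from below by a multiple of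
   c^2, while Gagliardo-Nirenberg bounds it from above by
   C(N,p)^p k0^(q/2) c^(p-q), a multiple of c^p since k0 is a multiple of c^2.
   Comparing the two gives c^(p-2) >= c0^(p-2); everything is positive, so
   the comparison is carried out on logarithms, where it is linear. *)

Section Exponents.
Variables (R : realType) (N : nat) (p : R).

Lemma exponent_gt2 : (0 < N)%N -> 2 + 4 / N%:R < p -> 2 < p.
Proof. move=> N_gt0; have : 0 < 4 / N%:R :> R by rewrite divr_gt0 ?ltr0n. lra. Qed.

Lemma p_gamma_pE : p != 0 -> p * gamma_p N p = N%:R * (p - 2) / 2.
Proof. by move=> p_neq0; rewrite /gamma_p; field. Qed.

Lemma p_gamma_p_gt2 : (0 < N)%N -> 2 + 4 / N%:R < p -> 2 < p * gamma_p N p.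
Proof.
move=> N_gt0 p_gt; have p2 := exponent_gt2 N_gt0 p_gt.
have N_gt0R : 0 < N%:R :> R by rewrite ltr0n.
have : 4 / N%:R * N%:R < (p - 2) * N%:R by rewrite ltr_pM2r //; lra.
by rewrite divfK ?gt_eqF // p_gamma_pE ?gt_eqF 1?mulrC; lra.
Qed.

End Exponents.

Lemma le_inf_mulr (R : realType) (E : set R) (x M : R) :
  (E !=set0)%classic -> 0 <= M -> (forall y, E y -> x <= y * M) ->
  x <= inf E * M.
Proof.
move=> [y Ey]; rewrite le_eqVlt => /predU1P[<- /(_ y Ey)|M_gt0 xE].
  by rewrite !mulr0.
rewrite -ler_pdivrMr //; apply: lb_le_inf; first by exists y.
by move=> z Ez; rewrite ler_pdivrMr // xE.
Qed.

Section GagliardoNirenberg.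
Variables (R : realType) (N : nat) (p : R).

Definition GN_admissible : set R :=
  [set C : R | 0 <= C /\
     forall (u : 'rV[R]_N -> R) (g : 'I_N -> 'rV[R]_N -> R), H1 u g ->
       Lpnorm p u <= C * (Num.sqrt (grad_sq g)) `^ gamma_p N p
                       * Lpnorm 2 u `^ (1 - gamma_p N p)]%classic.

Lemma GN_constE : GN_const N p = inf GN_admissible.
Proof. by []. Qed.

Lemma GN_const_ge0 : 0 <= GN_const N p.
Proof.
rewrite GN_constE; have [[C GC]|noC] := pselect (GN_admissible !=set0)%classic.
  by apply: lb_le_inf; [exists C | move=> y []].
by rewrite inf_out // => -[].
Qed.

(* [inf] of the empty set is 0, so [0 < GN_const N p] forces admissible
   constants to exist. *)
Lemma GN_ineq (u : 'rV[R]_N -> R) (g : 'I_N -> 'rV[R]_N -> R) :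
  0 < GN_const N p -> H1 u g ->
  Lpnorm p u <= GN_const N p * (Num.sqrt (grad_sq g)) `^ gamma_p N p
                             * Lpnorm 2 u `^ (1 - gamma_p N p).
Proof.
move=> C_gt0 H1u; rewrite -mulrA GN_constE.
have [GN_ne0|GN0] := pselect (GN_admissible !=set0)%classic; last first.
  by move: C_gt0; rewrite GN_constE inf_out ?ltxx // => -[].
apply: le_inf_mulr => //; first by rewrite mulr_ge0 ?powR_ge0.
by move=> C [_ /(_ u g H1u)]; rewrite mulrA.
Qed.

End GagliardoNirenberg.

Section LogComparison.
Variable R : realType.

Local Ltac pos_tac :=
  repeat first [apply: mulr_gt0 | rewrite invr_gt0 | apply: powR_gt0 | lra].

Let lnMp (x y : R) : 0 < x -> 0 < y -> ln (x * y) = ln x + ln y.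
Proof. by move=> x0 y0; rewrite lnM. Qed.

Let lnVp (x : R) : 0 < x -> ln x^-1 = - ln x.
Proof. by move=> x0; rewrite lnV. Qed.

Lemma ln_c0_formula (n mu p q C : R) :
  0 < n -> 0 < p -> 2 < q -> 0 < mu -> 0 < C ->
  ln (p * 2 `^ (q / 2) / (mu * q `^ ((q + 2) / 2))
      * ((q - 2) / n) `^ ((q - 2) / 2) * C `^ (- p))
  = ln p + q / 2 * ln 2 - (ln mu + (q + 2) / 2 * ln q)
    + (q - 2) / 2 * (ln (q - 2) - ln n) - p * ln C.
Proof.
move=> n0 p0 q2 mu0 C0.
by rewrite !lnMp ?lnVp ?ln_powR ?lnMp ?lnVp ?ln_powR ?lnMp ?lnVp; pos_tac.
Qed.

Lemma c0_formula_le (n mu p q C c A : R) :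
  0 < n -> 2 < p -> 2 < q -> 0 < mu -> 0 < c -> 0 < C ->
  n * c ^+ 2 / (q - 2) <= mu * (q / p) * A ->
  A `^ p^-1 <= C * Num.sqrt (q * n * c ^+ 2 / (2 * (q - 2))) `^ (q / p)
                 * c `^ (1 - q / p) ->
  (p * 2 `^ (q / 2) / (mu * q `^ ((q + 2) / 2))
      * ((q - 2) / n) `^ ((q - 2) / 2) * C `^ (- p)) `^ (p - 2)^-1 <= c.
Proof.
move=> n0 p2 q2 mu0 c0 C0 energy GN.
set k0 := q * n * c ^+ 2 / (2 * (q - 2)) in GN.
have c2_gt0 : 0 < c ^+ 2 by apply: exprn_gt0.
have k0_gt0 : 0 < k0 by rewrite divr_gt0 ?mulr_gt0 //; lra.
have lhs_gt0 : 0 < n * c ^+ 2 / (q - 2) by rewrite divr_gt0 ?mulr_gt0 //; lra.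
have qp_gt0 : 0 < q / p by rewrite divr_gt0 //; lra.
have A_gt0 : 0 < A by rewrite -(pmulr_rgt0 _ (mulr_gt0 mu0 qp_gt0)); lra.
have ln_k0 : ln k0 = ln q + ln n + ln c *+ 2 - (ln 2 + ln (q - 2)).
  by rewrite lnMp ?lnVp ?lnMp ?lnXn //; pos_tac.
clearbody k0.
have lnGN : ln A <= p * ln C + q / 2 * ln k0 + (p - q) * ln c.
  rewrite -ler_ln ?posrE ?mulr_gt0 ?powR_gt0 ?sqrtr_gt0 // in GN.
  move: GN; rewrite !lnMp ?mulr_gt0 ?powR_gt0 ?sqrtr_gt0 // !ln_powR.
  rewrite -powR12_sqrt ?ln_powR; last lra.
  rewrite -(ler_pM2r (_ : 0 < p)); last lra.
  have p_neq0 : p != 0 by rewrite gt_eqF //; lra.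
  have -> : p^-1 * ln A * p = ln A by field.
  suff -> : (ln C + q / p * (2^-1 * ln k0) + (1 - q / p) * ln c) * p
          = p * ln C + q / 2 * ln k0 + (p - q) * ln c by [].
  by field.
have lnEnergy : ln n + ln c *+ 2 - ln (q - 2) <= ln mu + (ln q - ln p) + ln A.
  rewrite -ler_ln ?posrE ?mulr_gt0 // in energy.
  move: energy; rewrite !lnMp ?lnVp ?lnXn //.
  all: pos_tac.
rewrite -ler_ln ?posrE ?powR_gt0 //; last by pos_tac.
rewrite ln_powR ln_c0_formula //; last lra.
rewrite mulrC ler_pdivrMr; last lra.
rewrite ln_k0 in lnGN; lra.
Qed.

End LogComparison.

Section Energy.
Variables (R : realType) (N : nat) (mu p c : R).

Local Notation q := (p * gamma_p N p).

Lemma c0_val_GN_const0 : 2 < p -> GN_const N p = 0 -> c0_val N mu p = 0.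
Proof.
move=> p2 C0; rewrite /c0_val C0 powR0; last by rewrite oppr_eq0 gt_eqF //; lra.
by rewrite mulr0 powR0 // invr_eq0 subr_eq0 gt_eqF.
Qed.

Lemma k0_valB : 2 < q ->
  k0_val N p c - N%:R / 2 * c ^+ 2 = N%:R * c ^+ 2 / (q - 2).
Proof. by move=> q2; rewrite /k0_val; field; lra. Qed.

Lemma P_energy_le0_Lp_lb (u : 'rV[R]_N -> R) (g : 'I_N -> 'rV[R]_N -> R) : 2 < q ->
  P_energy mu p c u g <= 0 -> grad_sq g = k0_val N p c ->
  N%:R * c ^+ 2 / (q - 2) <= mu * gamma_p N p * fine (Lp_int p u).
Proof. by move=> q2 + Hk; rewrite /P_energy Hk -k0_valB //; lra. Qed.

End Energy.

Theorem lemma4p1 (R : realType) (N : nat) (mu0 c p : R)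
  (u : 'rV[R]_N -> R) (g : 'I_N -> 'rV[R]_N -> R) :
  (2 <= N)%N -> 0 < mu0 -> 0 < c ->
  2 + 4 / N%:R < p -> (p%:E < crit_exp R N)%E ->
  inS c u g ->
  ((P_energy mu0 p c u g <= 0 -> grad_sq g = k0_val N p c -> c0_val N mu0 p <= c) /\
   (P_energy mu0 p c u g <= 0 -> c < c0_val N mu0 p -> grad_sq g <> k0_val N p c)).
Proof.
move=> N2 mu_gt0 c_gt0 p_gt _ [[H1u _] L2u].
have N_gt0 : (0 < N)%N by apply: leq_trans N2.
have p2 := exponent_gt2 N_gt0 p_gt; have q2 := p_gamma_p_gt2 N_gt0 p_gt.
have c0_le : P_energy mu0 p c u g <= 0 -> grad_sq g = k0_val N p c ->
    c0_val N mu0 p <= c.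
  move=> HP Hk; have [C0|C_neq0] := eqVneq (GN_const N p) 0.
    (* as for the junk value of [inf] on an empty set; [c0_val] is then 0 *)
    by rewrite c0_val_GN_const0 //; apply: ltW.
  have C_gt0 : 0 < GN_const N p by rewrite lt_def C_neq0 GN_const_ge0.
  have gammaE : gamma_p N p = p * gamma_p N p / p.
    by rewrite [p * _]mulrC mulfK // gt_eqF //; lra.
  apply: (c0_formula_le (A := fine (Lp_int p u)) _ p2 q2 mu_gt0 c_gt0 C_gt0).
  - by rewrite ltr0n.
  - by rewrite -gammaE; apply: (P_energy_le0_Lp_lb q2 HP Hk).
  - by rewrite -gammaE -/(k0_val N p c) -Hk -L2u; apply: GN_ineq.
by split=> // HP c_lt Hk; have := c0_le HP Hk; lra.
Qed.
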